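(* Let $\{x^k\}$ be an infinite sequence generated by the MPG algorithm described in the context (i.e., the algorithm never stops), and suppose that for each $j=1,\ldots,m$ the gradient $\nabla G_j$ is Lipschitz continuous with constant $L_j>0$. Then there exists $c>0$ such that $$\theta_\alpha(x^k)\ge c\big(F_{j_k^*}(x^{k+1})-F_{j_k^*}(x^k)\big)\quad\text{for all } k\in\mathbb{N},$$ where $j_k^*\in\arg\max_{j=1,\ldots,m}\nabla G_j(x^k)^\top d^k$ is the index chosen in Step 3 of the algorithm.
   Context: Let $F:\mathbb{R}^n\to(\mathbb{R}\cup\{+\infty\})^m$, $F=(F_1,\ldots,F_m)$, with $F_j=G_j+H_j$ for $j=1,\ldots,m$, where: (i) each $G_j:\mathbb{R}^n\to\mathbb{R}$ is continuously differentiable and convex; (ii) each $H_j:\mathbb{R}^n\to\mathbb{R}\cup\{+\infty\}$ is proper, convex and continuous on its domain; (iii) $\mathrm{dom}(F):=\{x: F_j(x)<+\infty\ \forall j\}$ is nonempty and closed. For $u,v\in\mathbb{R}^m$, $u\preceq v$ means $u_j\le v_j$ for all $j$. For $x\in\mathrm{dom}(F)$ and $\alpha>0$ define $\psi_x(u):=\max_{j=1,\ldots,m}\big(\nabla G_j(x)^\top(u-x)+H_j(u)-H_j(x)\big)$, $p_\alpha(x):=\arg\min_{u\in\mathbb{R}^n}\psi_x(u)+\frac{1}{2\alpha}\|u-x\|^2$ (unique minimizer), and $\theta_\alpha(x):=\psi_x(p_\alpha(x))+\frac{1}{2\alpha}\|p_\alpha(x)-x\|^2$. MPG algorithm. Step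 0: choose $x^0\in\mathrm{dom}(F)$, $\alpha>0$, $\gamma\in(0,2/\alpha)$, $0<\tau_1<\tau_2<1$; set $k=0$. Step 1: compute $p^k:=p_\alpha(x^k)$ and $\theta_\alpha(x^k)$. Step 2: if $\theta_\alpha(x^k)=0$, stop. Step 3: set $d^k:=p^k-x^k$, take $j_k^*\in\arg\max_{j}\nabla G_j(x^k)^\top d^k$, set $t=1$. Step 3.1: if $G_{j_k^*}(x^k+td^k)\le G_{j_k^*}(x^k)+t\nabla G_{j_k^*}(x^k)^\top d^k+t\frac{\gamma}{2}\|d^k\|^2$, go to Step 3.2; otherwise replace $t$ by some value in $[\tau_1 t,\tau_2 t]$ and repeat Step 3.1. Step 3.2: if $F(x^k+td^k)\preceq F(x^k)$, set $t_k=t$ and go to Step 4. Step 3.3: replace $t$ by some value in $[\tau_1 t,\tau_2 t]$; if $G_j(x^k+td^k)\le G_j(x^k)+t\nabla G_j(x^k)^\top d^k+t\frac{\gamma}{2}\|d^k\|^2$ for all $j=1,\ldots,m$, set $t_k=t$ and go to Step 4; otherwise repeat Step 3.3. Step 4: $x^{k+1}:=x^k+t_kd^k$, $k\leftarrow k+1$, go to Step 1. *)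

From HB Require Import structures.
From mathcomp Require Import all_boot all_order all_algebra.
From mathcomp Require Import all_classical all_reals all_analysis.
Set Implicit Arguments. Unset Strict Implicit. Unset Printing Implicit Defensive.
Import Order.TTheory GRing.Theory Num.Theory.
Import numFieldNormedType.Exports.
Local Open Scope classical_set_scope.
Local Open Scope ring_scope.

Section MPG.
Variables (R : realType) (n m : nat).
Local Notation vec := 'rV[R]_n.

Definition dot (u v : vec) : R := \sum_(i < n) u 0 i * v 0 i.
Definition enorm (u : vec) : R := Num.sqrt (dot u u).

Definition convex_fun (f : vec -> R) : Prop :=
  forall (x y : vec) (l : R), 0 <= l <= 1 ->
    f (l *: x + (1 - l) *: y) <= l * f x + (1 - l) * f y.

Definition edom (h : vec -> \bar R) : set vec := [set x | (h x < +oo)%E].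

Definition proper_fun (h : vec -> \bar R) : Prop :=
  (forall x, h x != -oo%E) /\ (exists x, (h x < +oo)%E).

(* convexity of an extended-valued proper function (inequality on the
   domain; outside the domain the right-hand side is +oo) *)
Definition econvex_fun (h : vec -> \bar R) : Prop :=
  forall (x y : vec) (l : R), x \in edom h -> y \in edom h -> 0 <= l <= 1 ->
    (h (l *: x + (1 - l) *: y)%R <= (l * fine (h x) + (1 - l) * fine (h y))%:E)%E.

Definition cont_on_dom (h : vec -> \bar R) : Prop :=
  {within edom h, continuous (fun x => fine (h x))}.

Variables (G : 'I_m -> vec -> R) (gradG : 'I_m -> vec -> vec)
          (H : 'I_m -> vec -> \bar R).

Definition Fj (j : 'I_m) (x : vec) : \bar R := ((G j x)%:E + H j x)%E.

Definition domF : set vec := [set x | forall j, (Fj j x < +oo)%E].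

Definition Fle (y x : vec) : Prop := forall j, (Fj j y <= Fj j x)%E.

Definition psi (x u : vec) : \bar R :=
  (\big[Order.max/-oo]_(j < m)
     ((dot (gradG j x) (u - x)%R)%:E + H j u - H j x))%E.

Definition prox_obj (alpha : R) (x u : vec) : \bar R :=
  (psi x u + ((enorm (u - x)) ^+ 2 / (2 * alpha))%:E)%E.

(* p is the (unique) minimizer of the subproblem, i.e. p = p_alpha(x) *)
Definition is_p_alpha (alpha : R) (x p : vec) : Prop :=
  forall u, (prox_obj alpha x p <= prox_obj alpha x u)%E.

Definition theta (alpha : R) (x p : vec) : \bar R := prox_obj alpha x p.

Definition Gtest (gamma : R) (j : 'I_m) (x d : vec) (t : R) : Prop :=
  G j (x + t *: d) <= G j x + t * dot (gradG j x) d + t * (gamma / 2) * (enorm d) ^+ 2.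

(* Step 3 (3.1 - 3.3): t is the step size t_k produced by the backtracking
   procedure from x = x^k, direction d = d^k, chosen index j = j_k^*.
   s i is the i-th trial value of t (s 0 = 1, each replacement takes a value in
   [tau1 t, tau2 t]); i1 is the trial at which Step 3.1 exits; N the final one. *)
Definition MPG_step_size (gamma tau1 tau2 : R) (x d : vec) (j : 'I_m) (t : R)
  : Prop :=
  exists (s : nat -> R) (i1 N : nat),
    [/\ s 0%N = 1,
        (forall i, tau1 * s i <= s i.+1 <= tau2 * s i),
        (forall i, (i < i1)%N -> ~ Gtest gamma j x d (s i)) &
        Gtest gamma j x d (s i1)] /\
    [/\ (i1 <= N)%N,
        t = s N &
        ((N = i1 /\ Fle (x + s i1 *: d) x) \/
         [/\ (i1 < N)%N, ~ Fle (x + s i1 *: d) x,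
             (forall i, (i1 < i < N)%N -> ~ (forall j', Gtest gamma j' x d (s i))) &
             (forall j', Gtest gamma j' x d (s N))])].

End MPG.

From HB Require Import structures.
From mathcomp Require Import all_boot all_order all_algebra.
From mathcomp Require Import all_classical all_reals all_analysis.
From mathcomp Require Import ring lra.
Set Implicit Arguments. Unset Strict Implicit. Unset Printing Implicit Defensive.
Import Order.TTheory GRing.Theory Num.Theory.
Import numFieldNormedType.Exports.
Local Open Scope classical_set_scope.
Local Open Scope ring_scope.

(* First, the step sizes are bounded below: by the descent
   lemma every sufficient-decrease test of Step 3 passes as soon as
   [t <= b], with [b] depending only on [gamma] and the Lipschitz constants,
   so backtracking stops at some [t_k >= tau1^2 b].  Second, comparing
   [p = p_alpha(x)] with [x + lam (p - x)], [lam = gamma alpha / 2 < 1], in the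
   strongly convex subproblem gives
   [psi_x(p) <= - (1 + lam) |p - x|^2 / (2 alpha)].  With the test of Step 3
   and the convexity of [H_j] this yields
   [F_j(x^(k+1)) - F_j(x^k) <= t_k (1 - lam) theta_alpha(x^k)], and since
   [theta_alpha(x^k) <= 0] one may replace [t_k] by [tau1^2 b]. *)

Section InnerProduct.
Variables (R : realType) (n : nat).
Local Notation vec := 'rV[R]_n.
Implicit Types (u v w : vec) (a : R).

Lemma dotC u v : dot u v = dot v u.
Proof. by apply: eq_bigr => i _; rewrite mulrC. Qed.

Lemma dotDr u v w : dot u (v + w) = dot u v + dot u w.
Proof. by rewrite /dot -big_split; apply: eq_bigr => i _; rewrite mxE mulrDr. Qed.

Lemma dotZr a u v : dot u (a *: v) = a * dot u v.
Proof. by rewrite /dot mulr_sumr; apply: eq_bigr => i _; rewrite mxE mulrCA. Qed.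

Lemma dotDl u v w : dot (u + v) w = dot u w + dot v w.
Proof. by rewrite dotC dotDr !(dotC w). Qed.

Lemma dotZl a u v : dot (a *: u) v = a * dot u v.
Proof. by rewrite dotC dotZr dotC. Qed.

Lemma dotNr u v : dot u (- v) = - dot u v.
Proof. by rewrite -scaleN1r dotZr mulN1r. Qed.

Lemma dot0r u : dot u 0 = 0.
Proof. by rewrite /dot big1 // => i _; rewrite mxE mulr0. Qed.

Lemma dot_ge0 u : 0 <= dot u u.
Proof. by apply: sumr_ge0 => i _; rewrite -expr2 sqr_ge0. Qed.

Lemma enorm_ge0 u : 0 <= enorm u.
Proof. exact: sqrtr_ge0. Qed.

Lemma enorm0 : enorm (0 : vec) = 0.
Proof. by rewrite /enorm dot0r sqrtr0. Qed.

Lemma enorm_sqr u : enorm u ^+ 2 = dot u u.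
Proof. by rewrite /enorm sqr_sqrtr // dot_ge0. Qed.

Lemma enormZ a u : enorm (a *: u) = `|a| * enorm u.
Proof. by rewrite /enorm dotZl dotZr mulrA -expr2 sqrtrM ?sqr_ge0 // sqrtr_sqr. Qed.

Lemma dot_young a u v : 0 < a -> 2 * dot u v <= dot u u / a + a * dot v v.
Proof.
move=> a_gt0; rewrite /dot mulr_sumr mulr_sumr mulr_suml -big_split /=.
apply: ler_sum => i _; rewrite -subr_ge0.
have -> : u 0 i * u 0 i / a + a * (v 0 i * v 0 i) - 2 * (u 0 i * v 0 i)
          = (u 0 i - a * v 0 i) ^+ 2 / a by field; rewrite gt_eqF.
by rewrite divr_ge0 ?sqr_ge0 ?ltW.
Qed.

Lemma dot_le_enorm a u v : 0 < a -> enorm u <= a * enorm v ->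
  dot u v <= a * enorm v ^+ 2.
Proof.
move=> a_gt0 le_uv.
have le_uu : dot u u / a <= a * enorm v ^+ 2.
  rewrite ler_pdivrMr // mulrAC -expr2 -exprMn -enorm_sqr.
  by rewrite ler_sqr ?nnegrE ?enorm_ge0 // mulr_ge0 ?enorm_ge0 ?ltW.
have := dot_young u v a_gt0; rewrite -(enorm_sqr v); lra.
Qed.

Lemma segmentE a u v : u + a *: (v - u) = a *: v + (1 - a) *: u.
Proof. by rewrite scalerBr scalerBl scale1r addrCA addrA. Qed.

End InnerProduct.

Section ConvexDescent.
Variables (R : realType) (n : nat).
Local Notation vec := 'rV[R]_n.

Lemma convex_differential_le (f : vec -> R) (y x : vec) :
  differentiable f y -> convex_fun f -> 'd f y (x - y) <= f x - f y.
Proof.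
move=> df cvf; rewrite -deriveE //.
have right_sub : ((0:R)^'+ : set_system R) `=>` (0:R)^'.
  move=> P; rewrite /dnbhs /at_right /within /= => hP.
  by apply: (filterS _ hP) => z Pz z0; apply: Pz; rewrite lt0r_neq0.
have dfxy : derivable f y (x - y) by exact: diff_derivable.
apply: (cvgr_to_le (cvg_trans (cvg_app _ right_sub) dfxy)).
near=> h.
have h_gt0 : 0 < h by near: h; exact: nbhs_right_gt.
have h_lt1 : h < 1 by near: h; exact: nbhs_right_lt.
rewrite /= ler_pdivrMl // (addrC (h *: _)) segmentE.
have := cvf x y h; rewrite (ltW h_gt0) (ltW h_lt1) => /(_ isT).
rewrite mulrBr; lra.
Unshelve. all: by end_near.
Qed.

(* Convexity replaces the usual integral form of the descent lemma, at the
   price of the constant [L] instead of [L / 2]. *)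
Lemma convex_descent (f : vec -> R) (g : vec -> vec) (L s : R) (y d : vec) :
  0 < L -> 0 < s ->
  (forall z, differentiable f z /\ forall v, 'd f z v = dot (g z) v) ->
  convex_fun f ->
  (forall a b, enorm (g a - g b) <= L * enorm (a - b)) ->
  f (y + s *: d) <= f y + s * dot (g y) d + L * s ^+ 2 * enorm d ^+ 2.
Proof.
move=> L_gt0 s_gt0 df cvf g_lip; set z := y + s *: d.
have [dfz dfzE] := df z.
have gradient_ineq : - s * dot (g z) d <= f y - f z.
  have := convex_differential_le y dfz cvf.
  have -> : y - z = - (s *: d) by rewrite /z opprD addrA subrr add0r.
  by rewrite dfzE dotNr dotZr mulNr.
have split_grad : dot (g z) d = dot (g y) d + dot (g z - g y) d.
  by rewrite -dotDl (addrC (g y)) subrK.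
have lip_term : dot (g z - g y) d <= L * s * enorm d ^+ 2.
  apply: dot_le_enorm; first exact: mulr_gt0.
  have -> : L * s * enorm d = L * enorm (z - y).
    by rewrite /z addrAC subrr add0r enormZ gtr0_norm // mulrA.
  exact: g_lip.
have := ler_wpM2l (ltW s_gt0) lip_term.
rewrite split_grad in gradient_ineq; lra.
Qed.

End ConvexDescent.

Section Backtracking.
Variables (R : realFieldType) (tau1 tau2 : R) (s : nat -> R).
Hypotheses (tau1_gt0 : 0 < tau1) (tau2_le1 : tau2 <= 1) (s0 : s 0%N = 1)
  (s_step : forall i, tau1 * s i <= s i.+1 <= tau2 * s i).

Lemma tau1_le_tau2 : tau1 <= tau2.
Proof.
by have /andP[lb ub] := s_step 0; rewrite s0 !mulr1 in lb ub; apply: le_trans ub.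
Qed.

Lemma tau1_le1 : tau1 <= 1.
Proof. exact: le_trans tau1_le_tau2 tau2_le1. Qed.

Lemma trial_gt0_le1 i : 0 < s i <= 1.
Proof.
have tau2_ge0 : 0 <= tau2 by rewrite (le_trans _ tau1_le_tau2) ?ltW.
elim: i => [|i /andP[si_gt0 si_le1]]; first by rewrite s0 ltr01 lexx.
have /andP[lb ub] := s_step i.
rewrite (lt_le_trans _ lb) ?mulr_gt0 //=.
exact: le_trans ub (mulr_ile1 tau2_ge0 (ltW si_gt0) tau2_le1 si_le1).
Qed.

Section TrialTest.
Variables (T : R -> Prop) (b : R).
Hypotheses (b_gt0 : 0 < b) (b_le1 : b <= 1)
  (T_small : forall r, 0 < r -> r <= b -> T r).

(* A rejected trial exceeds [b]. *)
Lemma trial_after_reject_ge i : ~ T (s i) -> tau1 * b <= s i.+1.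
Proof.
move=> rejected; have /andP[si_gt0 _] := trial_gt0_le1 i.
have b_lt : b < s i by rewrite ltNge; apply/negP => /(T_small si_gt0).
have /andP[+ _] := s_step i; apply: le_trans.
by rewrite ler_pM2l // ltW.
Qed.

Lemma first_accepted_trial_ge i1 :
  (forall i, (i < i1)%N -> ~ T (s i)) -> tau1 * b <= s i1.
Proof.
case: i1 => [|i] rejected; last exact/trial_after_reject_ge/rejected.
by rewrite s0; exact: le_trans (ler_piMl (ltW b_gt0) tau1_le1) b_le1.
Qed.

Lemma later_accepted_trial_ge i1 N : (i1 <= N)%N -> tau1 * b <= s i1 ->
  (forall i, (i1 < i < N)%N -> ~ T (s i)) -> tau1 ^+ 2 * b <= s N.
Proof.
move=> le_i1N si1_ge rejected.
have tau1_b_le : tau1 ^+ 2 * b <= tau1 * b.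
  by rewrite expr2 -mulrA ler_piMl ?tau1_le1 // mulr_ge0 ?ltW.
move: le_i1N; rewrite leq_eqVlt => /orP[/eqP <-|]; first exact: le_trans si1_ge.
case: N rejected => [//|N] rejected.
rewrite ltnS leq_eqVlt => /orP[/eqP <-|lt_i1N].
  have /andP[lb _] := s_step i1; apply: le_trans lb.
  by rewrite expr2 -mulrA ler_pM2l.
apply/(le_trans tau1_b_le)/trial_after_reject_ge/rejected.
by rewrite lt_i1N ltnSn.
Qed.

End TrialTest.
End Backtracking.

Section Subproblem.
Variables (R : realType) (n m : nat) (gradG : 'I_m -> 'rV[R]_n -> 'rV[R]_n)
  (H : 'I_m -> 'rV[R]_n -> \bar R).
Hypotheses (H_proper : forall j, proper_fun (H j))
  (H_convex : forall j, econvex_fun (H j)).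
Local Notation vec := 'rV[R]_n.
Local Notation psi := (psi gradG H).

Lemma H_fin_num j x : (H j x < +oo)%E -> H j x \is a fin_num.
Proof. by move=> lt_x; rewrite fin_numElt ltNye (proj1 (H_proper j)). Qed.

Lemma H_segment_le j x p l : H j x \is a fin_num -> H j p \is a fin_num ->
  0 <= l <= 1 ->
  H j (x + l *: (p - x)) \is a fin_num /\
  fine (H j (x + l *: (p - x))) <= l * fine (H j p) + (1 - l) * fine (H j x).
Proof.
move=> x_fin p_fin l01.
have in_edom y : H j y \is a fin_num -> y \in edom (H j).
  by move=> /fin_numPlt/andP[_ lt_y]; exact: mem_set.
have := H_convex (in_edom _ p_fin) (in_edom _ x_fin) l01.
rewrite -segmentE => le_seg.
have seg_fin : H j (x + l *: (p - x)) \is a fin_num.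
  exact/H_fin_num/(le_lt_trans le_seg)/ltry.
by split; rewrite // -lee_fin fineK.
Qed.

Lemma le_psi x u j : H j x \is a fin_num -> H j u \is a fin_num ->
  ((dot (gradG j x) (u - x) + fine (H j u) - fine (H j x))%:E <= psi x u)%E.
Proof.
move=> x_fin u_fin; apply: le_trans (le_bigmax _ _ j).
by rewrite -(fineK x_fin) -(fineK u_fin) /= -!EFinD.
Qed.

Lemma psi_le x u b : (forall j, H j x \is a fin_num) ->
  (forall j, H j u \is a fin_num) ->
  (forall j, ((dot (gradG j x) (u - x) + fine (H j u) - fine (H j x))%:E <= b)%E) ->
  (psi x u <= b)%E.
Proof.
move=> x_fin u_fin le_b; apply: bigmax_le => [|j _]; first exact: leNye.
by rewrite -(fineK (x_fin j)) -(fineK (u_fin j)) /= -!EFinD le_b.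
Qed.

Lemma psi_self_le0 x : (forall j, H j x \is a fin_num) -> (psi x x <= 0)%E.
Proof. by move=> x_fin; apply: psi_le => // j; rewrite subrr dot0r add0r subrr. Qed.

Lemma psi_segment_le x p l P : (forall j, H j x \is a fin_num) ->
  (forall j, H j p \is a fin_num) -> 0 <= l <= 1 ->
  (psi x p <= P%:E)%E -> (psi x (x + l *: (p - x)) <= (l * P)%:E)%E.
Proof.
move=> x_fin p_fin l01 le_P.
have seg_fin j := (H_segment_le (x_fin j) (p_fin j) l01).1.
apply: psi_le => // j; have [_ le_seg] := H_segment_le (x_fin j) (p_fin j) l01.
have := le_trans (le_psi (x_fin j) (p_fin j)) le_P.
rewrite !lee_fin [x + _ - x]addrC addKr dotZr => le_j.
have := ler_wpM2l (proj1 (andP l01)) le_j; nra.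
Qed.

Section ProxPoint.
Variables (alpha : R) (x p : vec).
Hypotheses (alpha_gt0 : 0 < alpha) (x_fin : forall j, H j x \is a fin_num)
  (p_opt : is_p_alpha gradG H alpha x p).

Lemma psi_p_alpha_le0 : (psi x p <= 0)%E.
Proof.
have := p_opt x; rewrite /prox_obj subrr enorm0 expr0n /= mul0r adde0.
move=> /le_trans/(_ (psi_self_le0 x_fin)); apply: le_trans.
by rewrite leeDl // lee_fin divr_ge0 ?sqr_ge0 ?mulr_ge0 ?ltW.
Qed.

Lemma p_alpha_fin j : H j p \is a fin_num.
Proof.
apply: H_fin_num; rewrite ltNge leye_eq; apply/negP => /eqP Hp_oo.
have := le_trans (le_bigmax _ _ j) psi_p_alpha_le0.
by rewrite /= Hp_oo -(fineK (x_fin j)).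
Qed.

Lemma psi_p_alpha_fin (j : 'I_m) : psi x p \is a fin_num.
Proof.
rewrite fin_numElt (lt_le_trans _ (le_psi (x_fin j) (p_alpha_fin j))) ?ltNye //=.
exact: le_lt_trans psi_p_alpha_le0 (ltry _).
Qed.

(* Compare [p] with the point [x + lam (p - x)] in the subproblem. *)
Lemma psi_p_alpha_bound lam P : 0 <= lam < 1 -> psi x p = P%:E ->
  P <= - (1 + lam) * (enorm (p - x) ^+ 2 / (2 * alpha)).
Proof.
move=> /andP[lam_ge0 lam_lt1] psiE; set E := _ / _.
have lam01 : 0 <= lam <= 1 by rewrite lam_ge0 ltW.
have le_seg : (psi x (x + lam *: (p - x)) <= (lam * P)%:E)%E.
  by apply: (psi_segment_le x_fin p_alpha_fin lam01); rewrite psiE.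
have := p_opt (x + lam *: (p - x)).
rewrite /prox_obj [x + _ - x]addrC addKr enormZ exprMn real_normK ?num_real //.
move=> /le_trans/(_ (leeD2r _ le_seg)); rewrite psiE -!EFinD lee_fin.
rewrite -[lam ^+ 2 * _ / _]mulrA -/E => le_lam.
have : (1 - lam) * (P + (1 + lam) * E) <= 0 by move: le_lam; nra.
rewrite pmulr_rle0 ?subr_gt0 //; lra.
Qed.

End ProxPoint.
End Subproblem.

Lemma uniform_step_threshold (R : realFieldType) (m : nat) (L : 'I_m -> R) (c : R) :
  0 < c -> exists2 b, 0 < b <= 1 & forall j, L j * b <= c.
Proof.
move=> c_gt0; pose Lmax := \big[Order.max/0]_j L j.
have Lmax_ge0 : 0 <= Lmax := bigmax_ge_id _ _ _ _.
have den_gt0 : 0 < Lmax + c by rewrite ltr_wpDl.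
exists (c / (Lmax + c)) => [|j].
  by rewrite divr_gt0 //= ler_pdivrMr // mul1r lerDr.
apply: le_trans (_ : Lmax * (c / (Lmax + c)) <= c).
  by apply: ler_wpM2r; [rewrite divr_ge0 ?ltW | exact: le_bigmax].
by rewrite mulrA ler_pdivrMr //; nra.
Qed.

Lemma descent_step_le (R : realFieldType) (lam E P t tmin : R) :
  0 <= lam < 1 -> 0 <= E -> P <= - (1 + lam) * E -> 0 < tmin <= t ->
  t * (P + 2 * lam * E) <= tmin * (1 - lam) * (P + E).
Proof.
move=> /andP[lam_ge0 lam_lt1] E_ge0 P_le /andP[tmin_gt0 tmin_le].
have sqr_term := mulr_ge0 (sqr_ge0 (1 - lam)) E_ge0.
have contract : P + 2 * lam * E <= (1 - lam) * (P + E).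
  by have := ler_wpM2l lam_ge0 P_le; nra.
have nonpos : (1 - lam) * (P + E) <= 0.
  by rewrite pmulr_rle0 ?subr_gt0 //; nra.
have := ler_wpM2l (ltW (lt_le_trans tmin_gt0 tmin_le)) contract.
move: nonpos; nra.
Qed.

Section MPGIteration.
Variables (R : realType) (n m : nat) (G : 'I_m -> 'rV[R]_n -> R)
  (gradG : 'I_m -> 'rV[R]_n -> 'rV[R]_n) (H : 'I_m -> 'rV[R]_n -> \bar R).
Local Notation vec := 'rV[R]_n.

Lemma Gtest_lipschitz gamma j (L : R) :
  (forall z, differentiable (G j) z /\ forall v, 'd (G j) z v = dot (gradG j z) v) ->
  convex_fun (G j) ->
  (forall y z, enorm (gradG j y - gradG j z) <= L * enorm (y - z)) ->
  0 < L -> forall (x d : vec) r, 0 < r -> L * r <= gamma / 2 ->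
  Gtest G gradG gamma j x d r.
Proof.
move=> G_diff G_convex G_lip L_gt0 x d r r_gt0 Lr_le.
apply: le_trans (convex_descent x d L_gt0 r_gt0 G_diff G_convex G_lip) _.
rewrite lerD2l; apply: ler_wpM2r; first exact: sqr_ge0.
by rewrite expr2 mulrCA ler_pM2l.
Qed.

Lemma MPG_step_size_spec gamma tau1 tau2 (x d : vec) j t b :
  0 < tau1 -> tau2 <= 1 -> 0 < b -> b <= 1 ->
  (forall j' r, 0 < r -> r <= b -> Gtest G gradG gamma j' x d r) ->
  MPG_step_size G gradG H gamma tau1 tau2 x d j t ->
  [/\ 0 < t <= 1, tau1 ^+ 2 * b <= t & Gtest G gradG gamma j x d t].
Proof.
move=> tau1_gt0 tau2_le1 b_gt0 b_le1 small.
move=> [s [i1 [N [[s0 s_step rejected1 accepted1] [le_i1N -> exit]]]]].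
have s_i1_ge := first_accepted_trial_ge tau1_gt0 tau2_le1 s0 s_step b_gt0 b_le1
  (small j) rejected1.
split; first exact: (trial_gt0_le1 tau1_gt0 tau2_le1 s0 s_step).
- apply: (later_accepted_trial_ge tau1_gt0 tau2_le1 s0 s_step b_gt0
    (fun r r_gt0 r_le j' => small j' r r_gt0 r_le) le_i1N s_i1_ge).
  case: exit => [[-> _] i /andP[lt1 lt2]|[_ _ rejected2 _] //].
  by have := ltn_trans lt1 lt2; rewrite ltnn.
- by case: exit => [[-> _]|[_ _ _ accepted2]].
Qed.

Hypotheses (H_proper : forall j, proper_fun (H j))
  (H_convex : forall j, econvex_fun (H j)).

Lemma Fj_step_le gamma j (x p : vec) t P :
  (forall j, H j x \is a fin_num) -> (forall j, H j p \is a fin_num) ->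
  0 <= t <= 1 -> Gtest G gradG gamma j x (p - x) t ->
  (psi gradG H x p <= P%:E)%E ->
  (Fj G H j (x + t *: (p - x)) - Fj G H j x
     <= (t * (P + gamma / 2 * enorm (p - x) ^+ 2))%:E)%E.
Proof.
move=> x_fin p_fin t01 G_dec le_P.
have [seg_fin le_seg] := H_segment_le H_proper H_convex (x_fin j) (p_fin j) t01.
have := le_trans (le_psi gradG (x_fin j) (p_fin j)) le_P; rewrite lee_fin => le_j.
have le_jt := ler_wpM2l (proj1 (andP t01)) le_j.
rewrite /Fj -(fineK seg_fin) -(fineK (x_fin j)) -!EFinD lee_fin.
move: G_dec le_seg le_jt; rewrite /Gtest; nra.
Qed.

Lemma domF_H_fin x j : x \in domF G H -> H j x \is a fin_num.
Proof.
move=> /set_mem /(_ j) lt_oo; apply: (H_fin_num H_proper); move: lt_oo.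
by rewrite /Fj; case: (H j x) => // r _; exact: ltry.
Qed.

Lemma MPG_iterates_fin alpha (x p : nat -> vec) (t : nat -> R) :
  0 < alpha -> x 0%N \in domF G H ->
  (forall k, is_p_alpha gradG H alpha (x k) (p k)) -> (forall k, 0 <= t k <= 1) ->
  (forall k, x k.+1 = x k + t k *: (p k - x k)) ->
  forall k j, H j (x k) \is a fin_num.
Proof.
move=> alpha_gt0 x0_dom p_opt t01 x_next.
elim=> [|k IH] j; first exact: (domF_H_fin j x0_dom).
rewrite x_next; apply: (H_segment_le H_proper H_convex (IH j) _ (t01 k)).1.
exact: (p_alpha_fin H_proper alpha_gt0 IH (p_opt k) j).
Qed.

Lemma MPG_iteration_decrease alpha gamma j (x p : vec) t tmin :
  0 < alpha -> 0 <= gamma -> gamma * alpha < 2 ->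
  (forall j, H j x \is a fin_num) -> is_p_alpha gradG H alpha x p ->
  0 < tmin -> tmin <= t <= 1 -> Gtest G gradG gamma j x (p - x) t ->
  (((tmin * (1 - gamma * alpha / 2))^-1)%:E
     * (Fj G H j (x + t *: (p - x)) - Fj G H j x)
   <= theta gradG H alpha x p)%E.
Proof.
move=> alpha_gt0 gamma_ge0 ga_lt2 x_fin p_opt tmin_gt0 /andP[tmin_le t_le1] G_dec.
set lam := gamma * alpha / 2; set E := enorm (p - x) ^+ 2 / (2 * alpha).
have lam01 : 0 <= lam < 1.
  rewrite /lam divr_ge0 ?(mulr_ge0 gamma_ge0 (ltW alpha_gt0)) //=.
  by rewrite ltr_pdivrMr // mul1r.
have p_fin := p_alpha_fin H_proper alpha_gt0 x_fin p_opt.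
have /fineK/esym psiE := psi_p_alpha_fin H_proper alpha_gt0 x_fin p_opt j.
set P := fine _ in psiE.
have t01 : 0 <= t <= 1 by rewrite t_le1 (le_trans (ltW tmin_gt0)).
have P_le := psi_p_alpha_bound H_proper H_convex alpha_gt0 x_fin p_opt lam01 psiE.
have le_P : (psi gradG H x p <= P%:E)%E by rewrite psiE.
have dF := Fj_step_le x_fin p_fin t01 G_dec le_P.
have gammaE : gamma / 2 * enorm (p - x) ^+ 2 = 2 * lam * E.
  by rewrite /lam /E; field; rewrite gt_eqF.
have c_gt0 : 0 < tmin * (1 - lam) by rewrite mulr_gt0 // subr_gt0; case/andP: lam01.
rewrite /theta /prox_obj psiE -EFinD.
apply: le_trans (lee_wpmul2l _ dF) _; first by rewrite lee_fin invr_ge0 ltW.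
rewrite -EFinM lee_fin gammaE ler_pdivrMl //.
apply: descent_step_le => //; last by rewrite tmin_gt0.
by rewrite /E divr_ge0 ?sqr_ge0 ?mulr_ge0 ?ltW.
Qed.

End MPGIteration.

Theorem mainTheorem6 (R : realType) (n m : nat)
  (G : 'I_m -> 'rV[R]_n -> R) (gradG : 'I_m -> 'rV[R]_n -> 'rV[R]_n)
  (H : 'I_m -> 'rV[R]_n -> \bar R) (L : 'I_m -> R)
  (alpha gamma tau1 tau2 : R)
  (x p : nat -> 'rV[R]_n) (jstar : nat -> 'I_m) (t : nat -> R) :
  (0 < m)%N ->
  (* (i) G_j continuously differentiable with gradient gradG_j, and convex *)
  (forall j (y : 'rV[R]_n), differentiable (G j) y /\
     (forall v, 'd (G j) y v = dot (gradG j y) v)) ->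
  (forall j, continuous (gradG j)) ->
  (forall j, convex_fun (G j)) ->
  (* (ii) H_j proper, convex, continuous on its domain *)
  (forall j, proper_fun (H j)) ->
  (forall j, econvex_fun (H j)) ->
  (forall j, cont_on_dom (H j)) ->
  (* (iii) dom F nonempty and closed *)
  domF G H !=set0 -> closed (domF G H) ->
  (* Lipschitz gradients *)
  (forall j, 0 < L j) ->
  (forall j (y z : 'rV[R]_n),
     enorm (gradG j y - gradG j z) <= L j * enorm (y - z)) ->
  (* parameters of Step 0 *)
  0 < alpha -> 0 < gamma -> gamma < 2 / alpha ->
  0 < tau1 -> tau1 < tau2 -> tau2 < 1 ->
  x 0%N \in domF G H ->
  (* the MPG iteration *)
  (forall k, is_p_alpha gradG H alpha (x k) (p k)) ->
  (forall k, theta gradG H alpha (x k) (p k) != 0%E) ->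
  (forall k j, dot (gradG j (x k)) (p k - x k)
               <= dot (gradG (jstar k) (x k)) (p k - x k)) ->
  (forall k, MPG_step_size G gradG H gamma tau1 tau2 (x k) (p k - x k)
               (jstar k) (t k)) ->
  (forall k, x k.+1 = x k + t k *: (p k - x k)) ->
  exists c : R, 0 < c /\
    forall k, (c%:E * (Fj G H (jstar k) (x k.+1) - Fj G H (jstar k) (x k))
               <= theta gradG H alpha (x k) (p k))%E.
Proof.
move=> _ G_diff _ G_convex H_proper H_convex _ _ _ L_gt0 G_lip alpha_gt0 gamma_gt0
  gamma_lt tau1_gt0 _ tau2_lt1 x0_dom p_opt _ _ step x_next.
have [b /andP[b_gt0 b_le1] Lb_le] :=
  uniform_step_threshold L (divr_gt0 gamma_gt0 (ltr0Sn _ 1)).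
have small j y d r : 0 < r -> r <= b -> Gtest G gradG gamma j y d r.
  move=> r_gt0 r_le; apply: (Gtest_lipschitz (G_diff j) (G_convex j) (G_lip j)) => //.
  exact: le_trans (ler_wpM2l (ltW (L_gt0 j)) r_le) (Lb_le j).
have spec k := MPG_step_size_spec tau1_gt0 (ltW tau2_lt1) b_gt0 b_le1
  (fun j => small j (x k) (p k - x k)) (step k).
have t01 k : 0 <= t k <= 1 by have [/andP[/ltW -> ->] _ _] := spec k.
have x_fin := MPG_iterates_fin H_proper H_convex alpha_gt0 x0_dom p_opt t01 x_next.
have ga_lt2 : gamma * alpha < 2 by rewrite -ltr_pdivlMr.
have lam_lt1 : gamma * alpha / 2 < 1 by rewrite ltr_pdivrMr // mul1r.
have tmin_gt0 : 0 < tau1 ^+ 2 * b by rewrite mulr_gt0 ?exprn_gt0.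
exists ((tau1 ^+ 2 * b) * (1 - gamma * alpha / 2))^-1.
split; first by rewrite invr_gt0 mulr_gt0 // subr_gt0.
move=> k; have [/andP[_ t_le1] t_ge G_dec] := spec k; rewrite x_next.
apply: (MPG_iteration_decrease H_proper H_convex alpha_gt0 (ltW gamma_gt0) ga_lt2
  (x_fin k) (p_opt k) tmin_gt0 _ G_dec).
by rewrite t_ge.
Qed.
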